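(* Suppose a group $G$ acts faithfully by order-preserving bijections on a totally ordered set $(\Omega,\le)$. Then the action has no crossings if and only if every left-ordering of $G$ induced from the action (with respect to any well-order on $\Omega$) is Conradian.
   Context: A crossing for the action is a 5-tuple $(f,g,u,v,w)$ with $f,g\in G$, $u,v,w\in\Omega$ such that: $u<w<v$; $g^nu<v$ and $f^nv>u$ for every $n\in\mathbb{N}$; and $f^Nv<w<g^Mu$ for some $M,N\in\mathbb{N}$. Given a well-order $\le^*$ on $\Omega$, the induced ordering $\preceq$ on $G$ is defined as follows: for $f\neq id$ let $w_f=\min_{\le^*}\{w\in\Omega: f(w)\neq w\}$, and declare $f\succ id$ iff $f(w_f)>w_f$; this is a left-ordering. A left-ordering is Conradian if for all $f\succ id$, $g\succ id$ there is $n\in\mathbb{N}$ with $fg^n\succ g$. *)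

From Stdlib Require Import Arith.
Set Implicit Arguments.

Definition is_group (G : Type) (mul : G -> G -> G) (one : G) (inv : G -> G) : Prop :=
  (forall a b c, mul a (mul b c) = mul (mul a b) c) /\
  (forall a, mul one a = a) /\ (forall a, mul a one = a) /\
  (forall a, mul (inv a) a = one) /\ (forall a, mul a (inv a) = one).

Definition gpow (G : Type) (mul : G -> G -> G) (one : G) (g : G) (n : nat) : G :=
  Nat.iter n (fun x => mul g x) one.

Definition strict_total_order (Omega : Type) (lt : Omega -> Omega -> Prop) : Prop :=
  (forall x, ~ lt x x) /\
  (forall x y z, lt x y -> lt y z -> lt x z) /\
  (forall x y, lt x y \/ x = y \/ lt y x).

Definition faithful_order_action (G Omega : Type) (mul : G -> G -> G) (one : G)
    (lt : Omega -> Omega -> Prop) (act : G -> Omega -> Omega) : Prop :=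
  (forall x, act one x = x) /\
  (forall g h x, act (mul g h) x = act g (act h x)) /\
  (forall g x y, lt x y -> lt (act g x) (act g y)) /\
  (forall g, (forall x, act g x = x) -> g = one).

Definition crossing (G Omega : Type) (mul : G -> G -> G) (one : G)
    (lt : Omega -> Omega -> Prop) (act : G -> Omega -> Omega)
    (f g : G) (u v w : Omega) : Prop :=
  lt u w /\ lt w v /\
  (forall n : nat, lt (act (gpow mul one g n) u) v /\ lt u (act (gpow mul one f n) v)) /\
  (exists M N : nat, lt (act (gpow mul one f N) v) w /\ lt w (act (gpow mul one g M) u)).

Definition has_crossing (G Omega : Type) (mul : G -> G -> G) (one : G)
    (lt : Omega -> Omega -> Prop) (act : G -> Omega -> Omega) : Prop :=
  exists f g u v w, crossing mul one lt act f g u v w.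

Definition well_order (Omega : Type) (wle : Omega -> Omega -> Prop) : Prop :=
  (forall x, wle x x) /\
  (forall x y, wle x y -> wle y x -> x = y) /\
  (forall x y z, wle x y -> wle y z -> wle x z) /\
  (forall x y, wle x y \/ wle y x) /\
  (forall P : Omega -> Prop, (exists x, P x) ->
     exists m, P m /\ forall y, P y -> wle m y).

(** Positive cone of the induced ordering: f > id iff f moves its
    wle-least moved point w_f upward, i.e. f(w_f) > w_f. *)
Definition induced_pos (G Omega : Type) (lt : Omega -> Omega -> Prop)
    (act : G -> Omega -> Omega) (wle : Omega -> Omega -> Prop) (f : G) : Prop :=
  exists w, act f w <> w /\ (forall u, act f u <> u -> wle w u) /\ lt w (act f w).

Definition induced_gt (G Omega : Type) (mul : G -> G -> G) (inv : G -> G)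
    (lt : Omega -> Omega -> Prop) (act : G -> Omega -> Omega)
    (wle : Omega -> Omega -> Prop) (f g : G) : Prop :=
  induced_pos lt act wle (mul (inv g) f).

Definition induced_conradian (G Omega : Type) (mul : G -> G -> G) (one : G)
    (inv : G -> G) (lt : Omega -> Omega -> Prop) (act : G -> Omega -> Omega)
    (wle : Omega -> Omega -> Prop) : Prop :=
  forall f g : G, induced_gt mul inv lt act wle f one -> induced_gt mul inv lt act wle g one ->
    exists n : nat, induced_gt mul inv lt act wle (mul f (gpow mul one g (S n))) g.

(** If no crossing exists and [f, g > id] have least moved points [a] and [b],
    either [a] comes before [b] in the well-order, and then [g] fixes [a] so
    that already [g^-1 f g] moves [a] upwards, or [b] comes no later than [a];
    then a failure of [g^-1 f g^(n+1) > id] for every [n] traps the orbit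
    [g^n b] below [v := f^-1 g b] while [f^n v] stays above [b], which is a
    crossing.  Conversely, for a crossing [(f, g, u, v, w)] take a well-order
    starting with [x := f^N v]; then positivity means moving [x] upwards, so
    [g^M f^N > id] and [g^M > id], while [g^-M (g^M f^N) g^(M(n+1))] sends [x]
    to [f^N g^(M(n+1)) f^N v < f^N v = x] for every [n], contradicting the
    Conradian property. *)

From mathcomp Require Import ssreflect ssrfun ssrbool eqtype boolp.
From mathcomp Require wochoice.
From Stdlib Require Import Classical Arith.

Set Implicit Arguments.

Section WellOrders.

Variable T : Type.

Lemma exists_well_order : exists R : T -> T -> Prop, well_order R.
Proof.
have [R R_wo] := @wochoice.well_ordering_principle {classic T}.
have R_chain : wochoice.wo_chain R predT by move=> A _; exact: R_wo.
have R_total a b : R a b \/ R b a.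
  by have /orP[] := wochoice.wo_chainW R_chain (x := a) (y := b) isT isT; auto.
have R_anti a b : R a b -> R b a -> a = b.
  by move=> ab ba; apply: (wochoice.wo_chain_antisymmetric R_chain); rewrite ?ab ?ba.
have R_min (P : T -> Prop) : (exists x, P x) -> exists m, P m /\ forall y, P y -> R m y.
  move=> [x Px].
  have ne : wochoice.nonempty [pred z : {classic T} | `[< P z >]].
    by exists x; rewrite inE; apply/asboolP.
  have [m [[/asboolP Pm m_low] _]] := R_wo _ ne.
  by exists m; split=> // y Py; apply: m_low; apply/asboolP.
have R_trans a b c : R a b -> R b c -> R a c.
  (* [a] is the least of [a], [b], [c] *)
  move=> ab bc.
  have [m [[->|[->|->]] m_low]] :=
    R_min (fun t => t = a \/ t = b \/ t = c) (ex_intro _ a (or_introl erefl)).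
  - by apply: m_low; auto.
  - by rewrite (R_anti a b ab); auto.
  - by rewrite -(R_anti b c bc); auto.
exists R; do !split=> //.
by move=> a; case: (R_total a a).
Qed.

Definition first_then (x0 : T) (R : T -> T -> Prop) (a b : T) : Prop :=
  a = x0 \/ (b <> x0 /\ R a b).

Lemma well_order_first_then x0 R : well_order R -> well_order (first_then x0 R).
Proof.
move=> [R_refl [R_anti [R_trans [R_total R_min]]]]; rewrite /first_then; do !split.
- by move=> a; case: (classic (a = x0)) => ?; [left|right].
- by move=> a b [->|[b0 ab]] [b_x0|[a0 ba]] //; apply: R_anti.
- move=> a b c [->|[b0 ab]]; first by left.
  by case=> [/b0 //|[c0 bc]]; right; split=> //; apply: R_trans ab bc.
- move=> a b; case: (classic (a = x0)) => [->|a0]; first by left; left.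
  case: (classic (b = x0)) => [->|b0]; first by right; left.
  by case: (R_total a b); [left|right]; right.
- move=> P P_ne; case: (classic (P x0)) => [Px0|nPx0].
    by exists x0; split=> // y _; left.
  have [m [Pm m_low]] := R_min P P_ne.
  exists m; split=> // y Py; right; split; last exact: m_low.
  by move=> y0; apply: nPx0; rewrite -y0.
Qed.

Lemma exists_well_order_least (x0 : T) :
  exists wle : T -> T -> Prop, well_order wle /\ forall y, wle x0 y.
Proof.
have [R R_wo] := exists_well_order.
by exists (first_then x0 R); split; [exact: well_order_first_then | left].
Qed.

End WellOrders.

Section OrderAction.

Variables (G Omega : Type) (mul : G -> G -> G) (one : G) (inv : G -> G)
  (lt : Omega -> Omega -> Prop) (act : G -> Omega -> Omega).

Hypothesis HG : is_group mul one inv.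
Hypothesis Hlt : strict_total_order lt.
Hypothesis act1 : forall x, act one x = x.
Hypothesis actM : forall g h x, act (mul g h) x = act g (act h x).
Hypothesis act_lt : forall g x y, lt x y -> lt (act g x) (act g y).

Local Notation "g ^+ n" := (gpow mul one g n).

Lemma mul1g a : mul one a = a.
Proof. by case: HG => _ []. Qed.

Lemma inv1g : inv one = one.
Proof. by case: HG => _ [_ [_ [_ mulgV]]]; rewrite -{2}(mulgV one) mul1g. Qed.

Lemma act_invK g x : act (inv g) (act g x) = x.
Proof. by case: HG => _ [_ [_ [mulVg _]]]; rewrite -actM mulVg act1. Qed.

Lemma act_Kinv g x : act g (act (inv g) x) = x.
Proof. by case: HG => _ [_ [_ [_ mulgV]]]; rewrite -actM mulgV act1. Qed.

Lemma act_gpow0 g x : act (g ^+ 0) x = x.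
Proof. exact: act1. Qed.

Lemma act_gpowS g n x : act (g ^+ S n) x = act g (act (g ^+ n) x).
Proof. exact: actM. Qed.

Lemma act_gpowD g m n x : act (g ^+ (m + n)) x = act (g ^+ m) (act (g ^+ n) x).
Proof.
elim: m => [|m IHm]; first by rewrite act_gpow0.
by rewrite /= !act_gpowS IHm.
Qed.

Lemma act_gpowM g m n x : act ((g ^+ m) ^+ n) x = act (g ^+ (m * n)) x.
Proof.
elim: n => [|n IHn]; first by rewrite Nat.mul_0_r !act_gpow0.
by rewrite act_gpowS IHn Nat.mul_succ_r Nat.add_comm act_gpowD.
Qed.

Lemma lt_irr x : ~ lt x x.
Proof. by case: Hlt. Qed.

Lemma lt_trans x y z : lt x y -> lt y z -> lt x z.
Proof. by case: Hlt => _ [lt_tr _]; apply: lt_tr. Qed.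

Lemma lt_asym x y : lt x y -> ~ lt y x.
Proof. by move=> xy yx; exact: lt_irr (lt_trans xy yx). Qed.

Lemma lt_nlt_trans x y z : lt x y -> ~ lt z y -> lt x z.
Proof.
move=> xy nzy; case: Hlt => _ [_ lt_total].
case: (lt_total y z) => [yz|[<- //|zy //]]; exact: lt_trans xy yz.
Qed.

Lemma nlt_lt_trans x y z : ~ lt y x -> lt y z -> lt x z.
Proof.
move=> nyx yz; case: Hlt => _ [_ lt_total].
case: (lt_total x y) => [xy|[-> //|yx //]]; exact: lt_trans xy yz.
Qed.

Lemma lt_gpow_orbit g x : lt x (act g x) -> forall n, lt (act (g ^+ n) x) (act (g ^+ S n) x).
Proof.
move=> x_gx; elim=> [|n IHn]; first by rewrite act_gpowS act_gpow0.
by rewrite !act_gpowS; apply: act_lt; rewrite -act_gpowS.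
Qed.

Lemma crossing_of_orbit_below f g b :
  lt b (act g b) -> ~ lt (act f b) b ->
  (forall n, ~ lt (act (inv f) (act g b)) (act (g ^+ S n) b)) ->
  crossing mul one lt act f g b (act (inv f) (act g b)) (act (g ^+ 2) b).
Proof.
move=> b_gb fb_ge orbit_le.
have orbit_lt n : lt (act (g ^+ n) b) (act (inv f) (act g b)).
  exact: lt_nlt_trans (lt_gpow_orbit b_gb n) (orbit_le n).
have fpow_gb k : lt b (act (f ^+ k) (act g b)).
  elim: k => [|k IHk]; first by rewrite act_gpow0.
  by rewrite act_gpowS; apply: nlt_lt_trans fb_ge (act_lt f IHk).
have f_v : act (f ^+ 1) (act (inv f) (act g b)) = act g b.
  by rewrite act_gpowS act_gpow0 act_Kinv.
have b_g2b : lt b (act (g ^+ 2) b).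
  by apply: lt_trans (lt_gpow_orbit b_gb 1); rewrite act_gpowS act_gpow0.
split=> //; split=> //; split.
- move=> n; split=> //; case: n => [|k]; first by move: (orbit_lt 0); rewrite !act_gpow0.
  by rewrite -Nat.add_1_r act_gpowD f_v.
- exists 3, 1; rewrite f_v; split; last exact: lt_gpow_orbit.
  by move: (lt_gpow_orbit b_gb 1); rewrite act_gpowS act_gpow0.
Qed.

Section WellOrder.

Variable wle : Omega -> Omega -> Prop.
Hypothesis wle_wo : well_order wle.

Definition fixes_below (h : G) (b : Omega) : Prop := forall y, ~ wle b y -> act h y = y.

Lemma induced_posP h :
  induced_pos lt act wle h <-> exists b, lt b (act h b) /\ fixes_below h b.
Proof.
split=> [[b [_ [b_least b_up]]]|[b [b_up b_fix]]].
  by exists b; split=> // y nby; apply: NNPP => /b_least.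
exists b; split; first by move=> hb; move: b_up; rewrite hb; apply: lt_irr.
by split=> // y hy; apply: NNPP => /b_fix.
Qed.

Lemma induced_gt1 h : induced_gt mul inv lt act wle h one <-> induced_pos lt act wle h.
Proof. by rewrite /induced_gt inv1g mul1g. Qed.

Lemma induced_pos_least x h : (forall y, wle x y) -> act h x <> x ->
  induced_pos lt act wle h <-> lt x (act h x).
Proof.
move=> x_least hx; rewrite induced_posP.
split=> [[b [b_up b_fix]]|x_up]; last by exists x; split=> // y /(_ (x_least y)).
case: wle_wo => _ [wle_anti _].
case: (classic (wle b x)) => [bx|nbx]; last by case: hx; apply: b_fix.
by rewrite (wle_anti _ _ (x_least b) bx).
Qed.

Lemma fixes_below_le h a b : wle a b -> fixes_below h b -> fixes_below h a.
Proof.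
case: wle_wo => _ [_ [wle_trans _]] ab h_fix y nay.
by apply: h_fix => b_y; apply: nay; apply: wle_trans ab b_y.
Qed.

Lemma fixes_below_mul h k b : fixes_below h b -> fixes_below k b -> fixes_below (mul h k) b.
Proof. by move=> h_fix k_fix y nby; rewrite actM k_fix // h_fix. Qed.

Lemma fixes_below_inv h b : fixes_below h b -> fixes_below (inv h) b.
Proof. by move=> h_fix y nby; rewrite -{1}(h_fix y nby) act_invK. Qed.

Lemma fixes_below_gpow h b n : fixes_below h b -> fixes_below (h ^+ n) b.
Proof.
move=> h_fix y nby; elim: n => [|n IHn]; first exact: act_gpow0.
by rewrite act_gpowS IHn h_fix.
Qed.

Lemma fixes_below_conj_step f g b n : fixes_below f b -> fixes_below g b ->
  fixes_below (mul (inv g) (mul f (g ^+ n))) b.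
Proof.
move=> f_fix g_fix.
apply: fixes_below_mul; first exact: fixes_below_inv.
by apply: fixes_below_mul; last exact: fixes_below_gpow.
Qed.

Lemma conradian_step_or_crossing f g :
  induced_pos lt act wle f -> induced_pos lt act wle g ->
  (exists n, induced_pos lt act wle (mul (inv g) (mul f (g ^+ S n)))) \/
  has_crossing mul one lt act.
Proof.
move=> /induced_posP[a [a_up f_fix]] /induced_posP[b [b_up g_fix]].
case: (classic (exists n, induced_pos lt act wle (mul (inv g) (mul f (g ^+ S n)))));
  [by left | move=> no_step; right].
case: wle_wo => _ [wle_anti [_ [wle_total _]]].
case: (classic (wle b a)) => [ba|nba].
- have fb_ge : ~ lt (act f b) b.
    case: (classic (a = b)) => [<-|ab]; first exact: lt_asym.
    have nab : ~ wle a b by move=> ab'; apply: ab; apply: wle_anti.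
    by rewrite (f_fix b nab); apply: lt_irr.
  exists f, g, b, (act (inv f) (act g b)), (act (g ^+ 2) b).
  apply: crossing_of_orbit_below => // n v_lt; apply: no_step; exists n.
  apply/induced_posP; exists b; split.
    rewrite 2!actM -{1}(act_invK g b); apply: act_lt.
    by move: (act_lt f v_lt); rewrite act_Kinv.
  exact: fixes_below_conj_step (fixes_below_le ba f_fix) g_fix.
- have ab : wle a b by case: (wle_total a b) => // /nba.
  have ga : act g a = a by apply: g_fix.
  case: no_step; exists 0; apply/induced_posP; exists a; split.
    rewrite 2!actM act_gpowS act_gpow0 ga -{1}(act_invK g a) ga.
    exact: act_lt.
  exact: fixes_below_conj_step f_fix (fixes_below_le ab g_fix).
Qed.

End WellOrder.

Theorem conradian_of_no_crossing : ~ has_crossing mul one lt act ->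
  forall wle, well_order wle -> induced_conradian mul one inv lt act wle.
Proof.
move=> no_crossing wle wle_wo f g /induced_gt1 f_pos /induced_gt1 g_pos.
by case: (conradian_step_or_crossing wle_wo f_pos g_pos).
Qed.

Lemma crossing_not_conradian f g u v w : crossing mul one lt act f g u v w ->
  exists wle, well_order wle /\ ~ induced_conradian mul one inv lt act wle.
Proof.
move=> [_ [_ [orbits [M [N [fNv_w w_gMu]]]]]].
set x := act (f ^+ N) v.
have [wle [wle_wo x_least]] := exists_well_order_least x.
have x_up h : lt x (act h x) -> induced_gt mul inv lt act wle h one.
  move=> x_hx; apply/induced_gt1; apply/(induced_pos_least wle_wo x_least) => //.
  by move=> hx; move: x_hx; rewrite hx; apply: lt_irr.
have x_gMu : lt x (act (g ^+ M) u) := lt_trans fNv_w w_gMu.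
have F_pos : induced_gt mul inv lt act wle (mul (g ^+ M) (f ^+ N)) one.
  apply: x_up; rewrite actM /x -act_gpowD.
  exact: lt_trans x_gMu (act_lt _ (proj2 (orbits (N + N)))).
have G_pos : induced_gt mul inv lt act wle (g ^+ M) one.
  exact: x_up (lt_trans x_gMu (act_lt _ (proj2 (orbits N)))).
exists wle; split=> // conradian.
have [n step] := conradian _ _ F_pos G_pos.
have x_down : lt (act (mul (inv (g ^+ M)) (mul (mul (g ^+ M) (f ^+ N)) ((g ^+ M) ^+ S n))) x) x.
  rewrite 3!actM act_invK act_gpowM; apply: act_lt.
  have := act_lt (g ^+ (M * S n)) x_gMu; rewrite -act_gpowD => x_lt.
  exact: lt_trans x_lt (proj1 (orbits _)).
move: step; rewrite /induced_gt (induced_pos_least wle_wo x_least) => [x_step|x_fixed].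
- exact: lt_asym x_step x_down.
- by move: x_down; rewrite x_fixed; apply: lt_irr.
Qed.

Theorem no_crossing_of_conradian :
  (forall wle, well_order wle -> induced_conradian mul one inv lt act wle) ->
  ~ has_crossing mul one lt act.
Proof.
move=> conradian [f [g [u [v [w /crossing_not_conradian [wle [wle_wo not_conradian]]]]]]].
exact: not_conradian (conradian wle wle_wo).
Qed.

End OrderAction.

Theorem mainTheorem17 (G Omega : Type) (mul : G -> G -> G) (one : G) (inv : G -> G)
    (lt : Omega -> Omega -> Prop) (act : G -> Omega -> Omega)
    (HG : is_group mul one inv) (Hlt : strict_total_order lt)
    (Hact : faithful_order_action mul one lt act) :
  ~ has_crossing mul one lt act <->
  (forall wle : Omega -> Omega -> Prop, well_order wle ->
     induced_conradian mul one inv lt act wle).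
Proof.
case: Hact => act1 [actM [act_lt _]]; split.
- exact: (conradian_of_no_crossing HG Hlt act1 actM act_lt).
- exact: (no_crossing_of_conradian HG Hlt act1 actM act_lt).
Qed.
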